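(* For every Bayesian network $(X_v)_{v\in V}$ on a finite DAG $\mathcal G$ with states $\mathcal A$ and full support, and every surjection $f:\mathcal A\to\mathcal B$, we have (D3) $\Rightarrow$ (D2) $\Rightarrow$ (D1). Moreover, neither implication can be reversed in general: there exist a DAG, a BN with full support and a surjection $f$ for which (D1) holds but (D2) fails, and there exist a DAG, a BN with full support and a surjection $f$ for which (D2) holds but (D3) fails.
   Context: $\mathcal G=(V,E)$ is a finite directed acyclic graph; $pa(v)$ is the set of parents of $v$, $nd(v)$ the set of non-descendants (vertices other than $v$ not reachable from $v$ by a directed path), $V_s=\{v:pa(v)=\emptyset\}$ the source nodes, $V_p=V\setminus V_s$. $\mathcal A,\mathcal B$ are finite sets with $|\mathcal A|>|\mathcal B|$ and $f:\mathcal A\to\mathcal B$ a surjection, applied coordinatewise to tuples. A Bayesian network (BN) on $\mathcal G$ with states $\mathcal A$ is specified by a distribution $\alpha_v$ on $\mathcal A$ for each $v\in V_s$ (the initial distribution) and, for each $v\in V_p$ and $a_{pa(v)}\in\mathcal A^{pa(v)}$, a distribution $P_v(\cdot\mid a_{pa(v)})$ on $\mathcal A$ (the CPDs); the random vector $(X_v)_{v\in V}$ has $\mathbb P(X=x)=\prod_{v\in V_s}\alpha_v(x_v)\prod_{v\in V_p}P_v(x_v\mid x_{pa(v)})$. Full support means every $x\in\mathcal A^V$ has positive probability. For an initial distribution $\tilde\alpha=(\tilde\alpha_v)_{v\in V_s}$, $X[\tilde\alpha]$ is the random vector obtained by replacing $\alpha$ by $\tilde\alpha$ and keeping all CPDs,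 with law $\mathbb P_{\tilde\alpha}$. $U_v=f(X_v)$, $U[\tilde\alpha]=f(X[\tilde\alpha])$. A random vector $(Y_v)_{v\in V}$ with finitely many values factorises over $\mathcal G$ if $\mathbb P(Y=y)=\prod_v q_v(y_v\mid y_{pa(v)})$ for some conditional distributions $q_v$ (equivalently $Y_v$ is conditionally independent of $Y_{nd(v)\setminus pa(v)}$ given $Y_{pa(v)}$ for all $v$). Conditions: (D1) $(U_v)_{v\in V}$ factorises over $\mathcal G$. (D2) for every initial distribution $\tilde\alpha$, $U[\tilde\alpha]$ factorises over $\mathcal G$. (D3) for every $\tilde\alpha$, $U[\tilde\alpha]$ factorises over $\mathcal G$, and for every $v\in V_p$, $b_v\in\mathcal B$, $b_{pa(v)}\in\mathcal B^{pa(v)}$, the value $\mathbb P_{\tilde\alpha}(U_v=b_v\mid U_{pa(v)}=b_{pa(v)})$ is the same for all $\tilde\alpha$ with $\mathbb P_{\tilde\alpha}(U_{pa(v)}=b_{pa(v)})>0$. *)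

From HB Require Import structures.
From mathcomp Require Import all_boot all_order all_algebra.
From mathcomp Require Import reals.
Set Implicit Arguments. Unset Strict Implicit. Unset Printing Implicit Defensive.
Import Order.TTheory GRing.Theory Num.Theory.
Local Open Scope ring_scope.

Section BN.
Variable R : realType.

Section Graph.
Variable V : finType.
Variable pa : V -> {set V}.

Definition dag_edge : rel V := fun u w => u \in pa w.

Definition acyclic : Prop := forall u w, u \in pa w -> ~~ connect dag_edge w u.

Definition nd (v : V) : {set V} := [set w | (w != v) && ~~ connect dag_edge v w].

Definition sources : {set V} := [set v | pa v == set0].

Definition local_in (T X : Type) (v : V) (q : {ffun V -> T} -> X) : Prop :=
  forall y z : {ffun V -> T}, (forall u, u \in pa v -> y u = z u) -> q y = q z.
End Graph.

Definition is_distr (T : finType) (p : T -> R) : Prop :=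
  (forall t, 0 <= p t) /\ \sum_(t : T) p t = 1.

Section Network.
Variables (V A B : finType) (pa : V -> {set V}) (f : A -> B).

Definition init_distr (alpha : V -> A -> R) : Prop :=
  forall v, v \in sources pa -> is_distr (alpha v).

(* CPDs: P v x a = P_v(a | x_{pa(v)}), depending only on x restricted to pa v *)
Definition CPDs (P : V -> {ffun V -> A} -> A -> R) : Prop :=
  forall v, v \notin sources pa ->
    local_in pa v (P v) /\ forall x, is_distr (P v x).

Definition is_BN (alpha : V -> A -> R) (P : V -> {ffun V -> A} -> A -> R) : Prop :=
  init_distr alpha /\ CPDs P.

Definition jointX (alpha : V -> A -> R) (P : V -> {ffun V -> A} -> A -> R)
  (x : {ffun V -> A}) : R :=
  (\prod_(v in sources pa) alpha v (x v)) *
  (\prod_(v in ~: sources pa) P v x (x v)).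

Definition full_support alpha P : Prop := forall x, 0 < jointX alpha P x.

Definition lawU alpha P (u : {ffun V -> B}) : R :=
  \sum_(x : {ffun V -> A} | [forall v, f (x v) == u v]) jointX alpha P x.

Definition probU alpha P (E : pred {ffun V -> B}) : R :=
  \sum_(u | E u) lawU alpha P u.

Definition ev_pa (v : V) (y : {ffun V -> B}) : pred {ffun V -> B} :=
  fun u => [forall w in pa v, u w == y w].

Definition ev_v_pa (v : V) (b : B) (y : {ffun V -> B}) : pred {ffun V -> B} :=
  fun u => (u v == b) && ev_pa v y u.

Definition condU alpha P (v : V) (b : B) (y : {ffun V -> B}) : R :=
  probU alpha P (ev_v_pa v b y) / probU alpha P (ev_pa v y).

End Network.

Definition factorises (V T : finType) (pa : V -> {set V})
  (p : {ffun V -> T} -> R) : Prop :=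
  exists q : V -> {ffun V -> T} -> T -> R,
    (forall v, local_in pa v (q v)) /\
    (forall v y, is_distr (q v y)) /\
    (forall y, p y = \prod_(v : V) q v y (y v)).

Section Conditions.
Variables (V A B : finType) (pa : V -> {set V}) (f : A -> B).
Variables (alpha : V -> A -> R) (P : V -> {ffun V -> A} -> A -> R).

Definition D1 : Prop := factorises pa (lawU pa f alpha P).

Definition D2 : Prop :=
  forall alpha', init_distr pa alpha' -> factorises pa (lawU pa f alpha' P).

Definition D3 : Prop :=
  D2 /\
  forall v, v \notin sources pa -> forall (b : B) (y : {ffun V -> B}),
  forall alpha1 alpha2, init_distr pa alpha1 -> init_distr pa alpha2 ->
    0 < probU pa f alpha1 P (ev_pa pa v y) ->
    0 < probU pa f alpha2 P (ev_pa pa v y) ->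
    condU pa f alpha1 P v b y = condU pa f alpha2 P v b y.
End Conditions.

End BN.

From HB Require Import structures.
From mathcomp Require Import all_boot all_order all_algebra.
From mathcomp Require Import reals ring lra.
Set Implicit Arguments. Unset Strict Implicit. Unset Printing Implicit Defensive.
Import Order.TTheory GRing.Theory Num.Theory.
Local Open Scope ring_scope.

(* (D3) contains (D2), and (D2) applied to the network's own initial distribution
   is (D1).  Both counterexamples live on the chain 0 -> 1 -> 2 with states
   {0, 1, 2}, coarsened to the indicator of the state 2.  On this chain a law of
   the form g(u0, u1) h(u1, u2) factorises, whereas every factorising law satisfies
   p(s,t,r) p(s',t,r') = p(s,t,r') p(s',t,r), i.e. U0 and U2 are independent given U1.
   In the first network the coarsened law has the product form for the uniform
   initial distribution but breaks the cross identity for the initial distribution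
   (1/2, 0, 1/2).  In the second, X2 is uniform whatever X1 is, so the coarsened law
   is always g(u0, u1) h(u2); but P(U1 = false | U0 = false) is 3/4 when X0 = 0 surely
   and 1/2 when X0 = 1 surely. *)

Section Implications.
Variables (R : realType) (V A B : finType) (pa : V -> {set V}) (f : A -> B).
Variables (alpha : V -> A -> R) (P : V -> {ffun V -> A} -> A -> R).

Lemma D3_D2 : D3 pa f P -> D2 pa f P.
Proof. by case. Qed.

Lemma D2_D1 : init_distr pa alpha -> D2 pa f P -> D1 pa f alpha P.
Proof. by move=> alpha_init; apply. Qed.

Lemma probU_jointX (E : pred {ffun V -> B}) :
  probU pa f alpha P E =
  \sum_(x : {ffun V -> A} | E [ffun v => f (x v)]) jointX pa alpha P x.
Proof.
rewrite (partition_big (fun x : {ffun V -> A} => [ffun v => f (x v)]) E) //=.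
apply: eq_bigr => u Eu; apply: eq_bigl => x.
apply/forallP/andP => [fx_u | [_ /eqP <- v]]; last by rewrite ffunE.
have -> : [ffun v => f (x v)] = u by apply/ffunP => v; rewrite ffunE; exact/eqP.
by split.
Qed.

Lemma probU_pred1 (u : {ffun V -> B}) : probU pa f alpha P (pred1 u) = lawU pa f alpha P u.
Proof. exact: big_pred1_eq. Qed.

End Implications.

Lemma acyclic_ranked (V : finType) (pa : V -> {set V}) (rank : V -> nat) :
  (forall u w, u \in pa w -> rank u < rank w)%N -> acyclic pa.
Proof.
move=> rank_pa u w uw; apply/negP => /connectP [p wp u_last].
have rank_path x q : path (dag_edge pa) x q -> (rank x <= rank (last x q))%N.
  elim: q x => [|y q IHq] x //= /andP [xy yq].
  exact: leq_trans (ltnW (rank_pa _ _ xy)) (IHq _ yq).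
by have := rank_pa _ _ uw; rewrite ltnNge u_last rank_path.
Qed.

Notation o0 := (@Ordinal 3 0 isT).
Notation o1 := (@Ordinal 3 1 isT).
Notation o2 := (@Ordinal 3 2 isT).

Lemma ord3P (i : 'I_3) : [\/ i = o0, i = o1 | i = o2].
Proof.
case: i => [[|[|[|m]]] lt_i3] //.
- by apply: Or31; apply: val_inj.
- by apply: Or32; apply: val_inj.
- by apply: Or33; apply: val_inj.
Qed.

Definition tab3 (T : Type) (x0 x1 x2 : T) (i : 'I_3) : T :=
  match val i with 0 => x0 | 1 => x1 | _ => x2 end.

Definition mk3 (T : Type) (x0 x1 x2 : T) : {ffun 'I_3 -> T} := [ffun i => tab3 x0 x1 x2 i].

Lemma mk3E (T : Type) (x0 x1 x2 : T) :
  [/\ mk3 x0 x1 x2 o0 = x0, mk3 x0 x1 x2 o1 = x1 & mk3 x0 x1 x2 o2 = x2].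
Proof. by rewrite !ffunE. Qed.

Lemma mk3K (T : Type) (x : {ffun 'I_3 -> T}) : mk3 (x o0) (x o1) (x o2) = x.
Proof. by apply/ffunP => i; rewrite ffunE; case: (ord3P i) => ->. Qed.

Lemma eq_mk3 (T : eqType) (x0 x1 x2 y0 y1 y2 : T) :
  (mk3 x0 x1 x2 == mk3 y0 y1 y2) = [&& x0 == y0, x1 == y1 & x2 == y2].
Proof.
apply/eqP/and3P => [e | [/eqP-> /eqP-> /eqP->] //].
have := congr1 (fun x : {ffun 'I_3 -> T} => (x o0, x o1, x o2)) e.
by rewrite !ffunE /tab3 /= => -[-> -> ->]; rewrite !eqxx.
Qed.

Lemma sum_ord3 (R : realType) (F : 'I_3 -> R) : \sum_(i : 'I_3) F i = F o0 + F o1 + F o2.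
Proof.
by rewrite !big_ord_recl big_ord0 addr0 addrA; congr (F _ + F _ + F _); exact: val_inj.
Qed.

Lemma prod_ord3 (R : realType) (F : 'I_3 -> R) : \prod_(i : 'I_3) F i = F o0 * F o1 * F o2.
Proof.
by rewrite !big_ord_recl big_ord0 mulr1 mulrA; congr (F _ * F _ * F _); exact: val_inj.
Qed.

Lemma sum_ffun3 (R : realType) (T : finType) (G : {ffun 'I_3 -> T} -> R) :
  \sum_x G x = \sum_(a : T) \sum_(b : T) \sum_(c : T) G (mk3 a b c).
Proof.
rewrite (reindex (fun p : T * (T * T) => mk3 p.1 p.2.1 p.2.2)) /=; last first.
  exists (fun x => (x o0, (x o1, x o2))) => [[a [b c]] _ | x _] /=; last exact: mk3K.
  by case: (mk3E a b c) => -> -> ->.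
under [RHS]eq_bigr => a _ do rewrite pair_bigA.
by rewrite pair_bigA.
Qed.

Definition pa_chain (v : 'I_3) : {set 'I_3} := tab3 set0 [set o0] [set o1] v.

Lemma acyclic_chain : acyclic pa_chain.
Proof.
apply: (@acyclic_ranked _ _ val) => u w.
by case: (ord3P w) => -> /=; rewrite /pa_chain /tab3 /= ?inE // => /eqP ->.
Qed.

Lemma in_sources_chain v : (v \in sources pa_chain) = (v == o0).
Proof.
rewrite inE /pa_chain /tab3; case: (ord3P v) => -> /=; first by rewrite !eqxx.
  by apply/idP => /eqP/setP/(_ o0); rewrite !inE.
by apply/idP => /eqP/setP/(_ o1); rewrite !inE.
Qed.

Section ChainLocal.
Variables (T X : Type) (q : {ffun 'I_3 -> T} -> X).

Lemma local_chain0 : local_in pa_chain o0 q -> forall y z : {ffun 'I_3 -> T}, q y = q z.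
Proof. by move=> q_loc y z; apply: q_loc => u; rewrite inE. Qed.

Lemma local_chain1 :
  local_in pa_chain o1 q -> forall y z : {ffun 'I_3 -> T}, y o0 = z o0 -> q y = q z.
Proof. by move=> q_loc y z yz; apply: q_loc => u; rewrite inE => /eqP ->. Qed.

Lemma local_chain2 :
  local_in pa_chain o2 q -> forall y z : {ffun 'I_3 -> T}, y o1 = z o1 -> q y = q z.
Proof. by move=> q_loc y z yz; apply: q_loc => u; rewrite inE => /eqP ->. Qed.

End ChainLocal.

Section ChainNetwork.
Variables (R : realType) (A B : finType) (f : A -> B).

Definition chain_cpd (p1 p2 : A -> A -> R) : 'I_3 -> {ffun 'I_3 -> A} -> A -> R :=
  fun v x => if v == o1 then p1 (x o0) else p2 (x o1).

Lemma chain_cpdsP (p1 p2 : A -> A -> R) :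
  (forall a, is_distr (p1 a)) -> (forall a, is_distr (p2 a)) ->
  CPDs pa_chain (chain_cpd p1 p2).
Proof.
move=> p1_distr p2_distr v; rewrite in_sources_chain.
case: (ord3P v) => -> // _; split=> [x y xy | x]; rewrite /chain_cpd /=;
  by [rewrite xy // inE | apply: p1_distr | apply: p2_distr].
Qed.

Lemma jointX_chain (alpha : 'I_3 -> A -> R) (p1 p2 : A -> A -> R) x :
  jointX pa_chain alpha (chain_cpd p1 p2) x =
  alpha o0 (x o0) * p1 (x o0) (x o1) * p2 (x o1) (x o2).
Proof.
rewrite /jointX (big_mkcond (mem (sources pa_chain))) (big_mkcond (mem (~: _))) /=.
by rewrite !prod_ord3 !in_setC !in_sources_chain /chain_cpd /= !mul1r !mulr1 mulrA.
Qed.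

Lemma probU_chain (alpha : 'I_3 -> A -> R) (p1 p2 : A -> A -> R) E :
  probU pa_chain f alpha (chain_cpd p1 p2) E =
  \sum_a \sum_b \sum_c
     (if E (mk3 (f a) (f b) (f c)) then alpha o0 a * p1 a b * p2 b c else 0).
Proof.
rewrite probU_jointX big_mkcond sum_ffun3; apply: eq_bigr => a _.
apply: eq_bigr => b _; apply: eq_bigr => c _.
have -> : [ffun v => f (mk3 a b c v)] = mk3 (f a) (f b) (f c).
  by apply/ffunP => v; rewrite !ffunE; case: (ord3P v) => ->.
by rewrite jointX_chain !ffunE.
Qed.

Lemma lawU_chain (alpha : 'I_3 -> A -> R) (p1 p2 : A -> A -> R) s t r :
  lawU pa_chain f alpha (chain_cpd p1 p2) (mk3 s t r) =
  \sum_a \sum_b \sum_c (if [&& f a == s, f b == t & f c == r]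
                        then alpha o0 a * p1 a b * p2 b c else 0).
Proof.
by rewrite -probU_pred1 probU_chain; do 3!(apply: eq_bigr => ? _); rewrite /= eq_mk3.
Qed.

End ChainNetwork.

Section ChainFactorisation.
Variables (R : realType) (T : finType).

Lemma factorises_chain_cross (p : {ffun 'I_3 -> T} -> R) s s' t r r' :
  factorises pa_chain p ->
  p (mk3 s t r) * p (mk3 s' t r') = p (mk3 s t r') * p (mk3 s' t r).
Proof.
case=> q [q_loc [_ p_prod]].
have p_mk3 x z : p (mk3 x t z) =
    q o0 (mk3 s t r) x * q o1 (mk3 x t r) t * q o2 (mk3 s t r) z.
  rewrite p_prod prod_ord3 /=; case: (mk3E x t z) => -> -> ->.
  rewrite (local_chain0 (q_loc o0) _ (mk3 s t r)).
  rewrite (local_chain1 (q_loc o1) (z := mk3 x t r)) ?ffunE //.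
  by rewrite (local_chain2 (q_loc o2) (z := mk3 s t r)) ?ffunE.
by rewrite !p_mk3; ring.
Qed.

Variables (g h : T -> T -> R).
Hypotheses (g_ge0 : forall s t, 0 <= g s t) (g_sum1 : \sum_s \sum_t g s t = 1).
Hypothesis h_distr : forall t, is_distr (h t).

Let g0 s := \sum_t g s t.

(* Where the marginal [g0 s] vanishes any distribution will do; the point mass
   at [s] is one that needs no inhabitant of [T]. *)
Let g1 s t := if g0 s == 0 then (t == s)%:R else g s t / g0 s.

Let q (v : 'I_3) (y : {ffun 'I_3 -> T}) : T -> R :=
  tab3 g0 (g1 (y o0)) (h (y o1)) v.

Lemma chain_factorises (p : {ffun 'I_3 -> T} -> R) :
  (forall s t r, p (mk3 s t r) = g s t * h t r) -> factorises pa_chain p.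
Proof.
move=> p_mk3; exists q; split; [|split].
- move=> v y z; rewrite /q /tab3; case: (ord3P v) => -> //= yz;
    by rewrite yz // /pa_chain /tab3 /= inE.
- move=> v y; rewrite /q /tab3; case: (ord3P v) => -> //=.
  + by split=> [s | //]; apply: sumr_ge0.
  + rewrite /g1; case: eqP => [_ | g0_neq0]; split.
    * by move=> t; rewrite ler0n.
    * by rewrite (bigD1 (y o0)) //= eqxx big1 ?addr0 // => t /negbTE ->.
    * by move=> t; rewrite divr_ge0 // sumr_ge0.
    * by rewrite -mulr_suml divff //; apply/eqP.
- move=> x; rewrite -[x]mk3K p_mk3 prod_ord3 /q /=.
  case: (mk3E (x o0) (x o1) (x o2)) => -> -> ->; rewrite /g1 /tab3 /=.
  case: eqP => [g0_eq0 | /eqP g0_neq0]; last by rewrite [g0 _ * _]mulrC divfK.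
  by rewrite (psumr_eq0P (fun t _ => g_ge0 _ t) g0_eq0) // g0_eq0 !mul0r.
Qed.

End ChainFactorisation.

Section Counterexamples.
Variable R : realType.

Lemma tab3_distr (r0 r1 r2 : R) :
  0 <= r0 -> 0 <= r1 -> 0 <= r2 -> r0 + r1 + r2 = 1 -> is_distr (tab3 r0 r1 r2).
Proof. by move=> r0_ge0 r1_ge0 r2_ge0 r_sum1; split; [case=> [[|[|]]] | rewrite sum_ord3]. Qed.

Lemma tab3_gt0 (r0 r1 r2 : R) i : 0 < r0 -> 0 < r1 -> 0 < r2 -> 0 < tab3 r0 r1 r2 i.
Proof. by case: (ord3P i) => ->. Qed.

Definition bern (r : R) (t : bool) : R := if t then r else 1 - r.

Lemma bern_distr (r : R) : 0 <= r <= 1 -> is_distr (bern r).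
Proof.
case/andP=> r_ge0 r_le1; split; first by case; rewrite /bern ?subr_ge0.
by rewrite big_bool /bern /= addrC subrK.
Qed.

Definition unif3 : 'I_3 -> R := tab3 (1/3) (1/3) (1/3).

Definition coarsen (a : 'I_3) : bool := val a == 2.

Lemma coarsen_surj b : exists a, coarsen a = b.
Proof. by case: b; [exists o2 | exists o0]. Qed.

Lemma card_coarsen : (#|{: bool}| < #|{: 'I_3}|)%N.
Proof. by rewrite card_bool card_ord. Qed.

Lemma full_support_chain (alpha : 'I_3 -> 'I_3 -> R) (p1 p2 : 'I_3 -> 'I_3 -> R) :
  (forall a, 0 < alpha o0 a) -> (forall a b, 0 < p1 a b) -> (forall a b, 0 < p2 a b) ->
  full_support pa_chain alpha (chain_cpd p1 p2).
Proof. by move=> alpha_gt0 p1_gt0 p2_gt0 x; rewrite jointX_chain !mulr_gt0. Qed.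

End Counterexamples.

Section D1NotD2.
Variable R : realType.

Definition unif_init : 'I_3 -> 'I_3 -> R := fun _ => unif3 R.

Definition d1_cpd : 'I_3 -> {ffun 'I_3 -> 'I_3} -> 'I_3 -> R :=
  chain_cpd (tab3 (tab3 (1/2) (1/4) (1/4)) (tab3 (1/4) (1/2) (1/4)) (tab3 (3/8) (3/8) (1/4)))
            (tab3 (tab3 (1/2) (1/4) (1/4)) (tab3 (1/8) (1/8) (3/4)) (unif3 R)).

Lemma d1_BN : is_BN pa_chain unif_init d1_cpd.
Proof.
split=> [v _ | ]; first by apply: tab3_distr; lra.
by apply: chain_cpdsP => a; case: (ord3P a) => ->; apply: tab3_distr; lra.
Qed.

Lemma d1_full_support : full_support pa_chain unif_init d1_cpd.
Proof.
by apply: full_support_chain => [a | a b | a b];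
  case: (ord3P a) => ->; apply: tab3_gt0; lra.
Qed.

Lemma d1_D1 : D1 pa_chain coarsen unif_init d1_cpd.
Proof.
apply: (@chain_factorises _ _ (fun s t => bern (1/3) s * bern (1/4) t)
                              (fun t => bern (if t then 1/3 else 1/2))).
- by move=> s t; case: s; case: t; rewrite /bern; lra.
- by rewrite !big_bool /bern /=; lra.
- by move=> t; apply: bern_distr; case: t; lra.
- move=> s t r; rewrite lawU_chain !sum_ord3 /bern /unif_init /unif3 /tab3 /coarsen /=.
  by case: s; case: t; case: r => /=; lra.
Qed.

Lemma d1_not_D2 : ~ D2 pa_chain coarsen d1_cpd.
Proof.
pose alpha : 'I_3 -> 'I_3 -> R := fun _ => tab3 (1/2) 0 (1/2).
move=> /(_ alpha) D2_alpha.
have /D2_alpha : init_distr pa_chain alpha by move=> v _; apply: tab3_distr; lra.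
move=> /(factorises_chain_cross false true false false true).
by rewrite /d1_cpd !lawU_chain !sum_ord3 /alpha /unif3 /tab3 /coarsen /=; lra.
Qed.

End D1NotD2.

Section D2NotD3.
Variable R : realType.

Definition d2_cpd : 'I_3 -> {ffun 'I_3 -> 'I_3} -> 'I_3 -> R :=
  chain_cpd (tab3 (tab3 (1/2) (1/4) (1/4)) (tab3 (1/4) (1/4) (1/2)) (unif3 R))
            (fun _ => unif3 R).

Lemma d2_BN : is_BN pa_chain (unif_init R) d2_cpd.
Proof.
split=> [v _ | ]; first by apply: tab3_distr; lra.
by apply: chain_cpdsP => a; [case: (ord3P a) => -> |]; apply: tab3_distr; lra.
Qed.

Lemma d2_full_support : full_support pa_chain (unif_init R) d2_cpd.
Proof.
by apply: full_support_chain => [a | a b | _ b];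
  [| case: (ord3P a) => -> |]; apply: tab3_gt0; lra.
Qed.

(* The law of [(U_0, U_1)] when [X_0] has law [al]. *)
Definition d2_pair_law (al : 'I_3 -> R) (s t : bool) : R :=
  if s then al o2 * bern (1/3) t
  else al o0 * bern (1/4) t + al o1 * bern (1/2) t.

Lemma d2_D2 : D2 pa_chain coarsen d2_cpd.
Proof.
move=> alpha /(_ o0); rewrite in_sources_chain => /(_ isT) [al_ge0].
rewrite sum_ord3 => al_sum1.
move: (al_ge0 o0) (al_ge0 o1) (al_ge0 o2) => al0_ge0 al1_ge0 al2_ge0.
apply: (@chain_factorises _ _ (d2_pair_law (alpha o0)) (fun=> bern (1/3))).
- by move=> s t; case: s; case: t; rewrite /d2_pair_law /bern; nra.
- by rewrite !big_bool /d2_pair_law /bern /=; lra.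
- by move=> _; apply: bern_distr; lra.
- move=> s t r; rewrite lawU_chain !sum_ord3 /d2_pair_law /bern /unif3 /tab3 /coarsen /=.
  by case: s; case: t; case: r => /=; lra.
Qed.

Definition point_init (k : 'I_3) : 'I_3 -> 'I_3 -> R := fun _ a => (a == k)%:R.

Lemma point_init_distr k : init_distr pa_chain (point_init k).
Proof.
move=> v _; split=> [a | ]; first exact: ler0n.
by rewrite sum_ord3; case: (ord3P k) => ->; rewrite /point_init /= ?add0r ?addr0.
Qed.

Lemma ev_pa_chain1 (y u : {ffun 'I_3 -> bool}) : ev_pa pa_chain o1 y u = (u o0 == y o0).
Proof.
apply/forall_inP/eqP => [uy | u0_y0 w]; first by apply/eqP/uy; rewrite inE.
by rewrite inE => /eqP ->; apply/eqP.
Qed.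

Lemma d2_not_D3 : ~ D3 pa_chain coarsen d2_cpd.
Proof.
set y := mk3 false false false.
have pa_sure k : k != o2 ->
    probU pa_chain coarsen (point_init k) d2_cpd (ev_pa pa_chain o1 y) = 1.
  rewrite probU_chain !sum_ord3 !ev_pa_chain1 !ffunE.
  rewrite /point_init /d2_cpd /unif3 /tab3 /coarsen /=.
  by case: (ord3P k) => -> //= _; lra.
have joint k : probU pa_chain coarsen (point_init k) d2_cpd (ev_v_pa pa_chain o1 false y) =
               tab3 (3/4) (1/2) 0 k.
  rewrite probU_chain !sum_ord3 /ev_v_pa !ev_pa_chain1 !ffunE.
  rewrite /point_init /d2_cpd /unif3 /tab3 /coarsen /=.
  by case: (ord3P k) => -> /=; lra.
have o1_parent : o1 \notin sources pa_chain by rewrite in_sources_chain.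
case=> _ /(_ o1 o1_parent false y _ _ (point_init_distr o0) (point_init_distr o1)).
by rewrite /condU !pa_sure // !joint /tab3 /= !divr1 => /(_ ltr01 ltr01); lra.
Qed.

End D2NotD3.

Theorem mainTheorem1 (R : realType) :
  (forall (V A B : finType) (pa : V -> {set V}) (f : A -> B)
          (alpha : V -> A -> R) (P : V -> {ffun V -> A} -> A -> R),
      acyclic pa -> (#|B| < #|A|)%N -> (forall b, exists a, f a = b) ->
      is_BN pa alpha P -> full_support pa alpha P ->
      (D3 pa f P -> D2 pa f P) /\ (D2 pa f P -> D1 pa f alpha P))
  /\
  (exists (V A B : finType) (pa : V -> {set V}) (f : A -> B)
          (alpha : V -> A -> R) (P : V -> {ffun V -> A} -> A -> R),
      [/\ acyclic pa /\ (#|B| < #|A|)%N, (forall b, exists a, f a = b),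
          is_BN pa alpha P, full_support pa alpha P &
          D1 pa f alpha P /\ ~ D2 pa f P])
  /\
  (exists (V A B : finType) (pa : V -> {set V}) (f : A -> B)
          (alpha : V -> A -> R) (P : V -> {ffun V -> A} -> A -> R),
      [/\ acyclic pa /\ (#|B| < #|A|)%N, (forall b, exists a, f a = b),
          is_BN pa alpha P, full_support pa alpha P &
          D2 pa f P /\ ~ D3 pa f P]).
Proof.
split; [|split].
- move=> V A B pa f alpha P _ _ _ [alpha_init _] _.
  by split; [exact: D3_D2 | exact: D2_D1].
- exists _, _, _, pa_chain, coarsen, (unif_init R), (d1_cpd R).
  split; [exact: (conj acyclic_chain card_coarsen) | exact: coarsen_surj |
          exact: d1_BN | exact: d1_full_support | split; [exact: d1_D1 | exact: d1_not_D2]].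
- exists _, _, _, pa_chain, coarsen, (unif_init R), (d2_cpd R).
  split; [exact: (conj acyclic_chain card_coarsen) | exact: coarsen_surj |
          exact: d2_BN | exact: d2_full_support | split; [exact: d2_D2 | exact: d2_not_D3]].
Qed.
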